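(* Let $P$ be a trivial poset. If $w(P)=1$, then $R(P,Q_n)=n+h(P)-1$ for every positive integer $n$. If $w(P)\ge2$, then for every positive integer $n$, $$n+h(P)+1\le R(P,Q_n)<n+h(P)+\log(w(P))+\tfrac12\log\log(w(P))+1.$$
   Context: The poset $\mathcal{V}$ has three elements $A,B,C$ with $C\le A$, $C\le B$, $A$ and $B$ incomparable; the poset $\Lambda$ (upside-down $\mathcal{V}$) has three elements $A,B,C$ with $A\le C$, $B\le C$, $A$ and $B$ incomparable. A poset is trivial if it contains no induced subposet isomorphic to $\mathcal{V}$ or to $\Lambda$ (equivalently, it is a disjoint union of chains that are pairwise element-wise incomparable). The height $h(P)$ is the size of a largest chain in $P$; the width $w(P)$ is the size of a largest antichain in $P$. $Q_n$ is the Boolean lattice of subsets of an $n$-element set ordered by inclusion. $R(P_1,P_2)$ is the smallest integer $N$ such that every blue/red coloring of the elements of $Q_N$ contains an all-blue induced copy of $P_1$ or an all-red induced copy of $P_2$. $\log$ is base $2$. *)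

From mathcomp Require Import all_boot.
From Stdlib Require Import Reals.
Set Implicit Arguments. Unset Strict Implicit. Unset Printing Implicit Defensive.

Definition is_poset (T : finType) (le : rel T) : Prop :=
  reflexive le /\ antisymmetric le /\ transitive le.

Definition Qle (n : nat) : rel {set 'I_n} := fun A B => A \subset B.

Definition is_chain (T : finType) (le : rel T) (S : {set T}) : bool :=
  [forall x in S, forall y in S, le x y || le y x].
Definition is_antichain (T : finType) (le : rel T) (S : {set T}) : bool :=
  [forall x in S, forall y in S, (x != y) ==> (~~ le x y && ~~ le y x)].

Definition height (T : finType) (le : rel T) : nat :=
  \max_(S : {set T} | is_chain le S) #|S|.
Definition width (T : finType) (le : rel T) : nat :=
  \max_(S : {set T} | is_antichain le S) #|S|.

Definition has_V (T : finType) (le : rel T) : Prop :=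
  exists a b c : T, [/\ c != a, c != b, le c a, le c b & ~~ le a b && ~~ le b a].
Definition has_Lambda (T : finType) (le : rel T) : Prop :=
  exists a b c : T, [/\ a != c, b != c, le a c, le b c & ~~ le a b && ~~ le b a].
Definition trivial_poset (T : finType) (le : rel T) : Prop :=
  ~ has_V le /\ ~ has_Lambda le.

Definition induced_copy (T : finType) (le : rel T) (N : nat)
  (f : T -> {set 'I_N}) : Prop :=
  injective f /\ forall x y, le x y <-> f x \subset f y.

(* A monochromatic induced copy of color b (true = blue, false = red). *)
Definition mono_copy (T : finType) (le : rel T) (N : nat)
  (col : {set 'I_N} -> bool) (b : bool) : Prop :=
  exists f : T -> {set 'I_N}, induced_copy le f /\ forall x, col (f x) = b.

Definition ramsey_prop (T1 : finType) (le1 : rel T1) (T2 : finType) (le2 : rel T2)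
  (N : nat) : Prop :=
  forall col : {set 'I_N} -> bool, mono_copy le1 col true \/ mono_copy le2 col false.

Definition is_ramsey_number (T1 : finType) (le1 : rel T1) (T2 : finType) (le2 : rel T2)
  (N : nat) : Prop :=
  ramsey_prop le1 le2 N /\ forall M, M < N -> ~ ramsey_prop le1 le2 M.

Definition log2 (x : R) : R := (ln x / ln 2)%R.

From mathcomp Require Import all_boot.
From Stdlib Require Import Reals Lra Classical.
From mathcomp Require Import ssrnat zify.
Set Implicit Arguments. Unset Strict Implicit. Unset Printing Implicit Defensive.

(* Let P be a trivial poset of height h and width w.  Comparability is then an
   equivalence relation whose classes are chains (the components of P).

   Colour the subsets of [N] by their size ("level colourings").
   An induced copy of a poset maps a chain to sets of pairwise distinct sizes, so
   a colour class meeting few levels contains no copy of a poset with a long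
   chain.  Q_n has a chain of n+1 elements and P one of h elements; when w >= 2
   some element of P is incomparable to a longest chain, forcing that chain to
   avoid the levels 0 and N.  This gives R(P,Q_n) >= n+h-1, resp. >= n+h+1.

   If w <= C(k, k/2), embed Q_n x Q_k x [h] into Q_(n+k+h-1).
   For every Y in Q_k either some red section X |-> (X, Y, J X), J monotone,
   gives a red Q_n, or Q_n x {Y} x [h] holds a blue chain of length h.  In the
   latter case, label the components of P by distinct sets of the middle level
   of Q_k and send each element to the point of its component's blue chain
   indexed by its rank: this is a blue induced copy of P.  Hence
   R(P,Q_n) <= n+k+h-1.

   Finally a central binomial estimate turns the least admissible k into the
   bound log w + (1/2) log log w of the statement. *)

Definition cmp (T : finType) (le : rel T) : rel T := fun x y => le x y || le y x.

Lemma cmp_sym (T : finType) (le : rel T) x y : cmp le x y = cmp le y x.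
Proof. by rewrite /cmp orbC. Qed.

(* Two elements comparable to a common one are comparable: otherwise the three
   of them would induce a V or a Lambda. *)
Lemma cmp_trans (T : finType) (le : rel T) : is_poset le -> trivial_poset le ->
  forall x y z, cmp le x y -> cmp le y z -> cmp le x z.
Proof.
move=> le_poset le_trivial x y z.
have [_ [_ le_trans]] := le_poset; have [noV noL] := le_trivial.
rewrite /cmp; case Exz: (le x z) => //; case Ezx: (le z x) => //=.
have Nxz : ~~ le x z && ~~ le z x by rewrite Exz Ezx.
case/orP=> Hxy; case/orP=> Hyz.
- by rewrite (le_trans _ _ _ Hxy Hyz) in Exz.
- have [Exy|Nxy] := eqVneq x y; first by subst y; rewrite Hyz in Ezx.
  have [Ezy|Nzy] := eqVneq z y; first by subst y; rewrite Hxy in Exz.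
  by case: noL; exists x, z, y.
- have [Exy|Nxy] := eqVneq y x; first by subst y; rewrite Hyz in Exz.
  have [Ezy|Nzy] := eqVneq y z; first by subst y; rewrite Hxy in Ezx.
  by case: noV; exists x, z, y.
- by rewrite (le_trans _ _ _ Hyz Hxy) in Ezx.
Qed.

Section HeightWidth.
Variables (T : finType) (le : rel T).

Lemma height_ub S : is_chain le S -> #|S| <= height le.
Proof. exact: (@leq_bigmax_cond _ _ (fun S : {set T} => #|S|)). Qed.

Lemma width_ub S : is_antichain le S -> #|S| <= width le.
Proof. exact: (@leq_bigmax_cond _ _ (fun S : {set T} => #|S|)). Qed.

Lemma height_wit : exists2 S, is_chain le S & #|S| = height le.
Proof.
have : 0 < #|[pred S : {set T} | is_chain le S]|.
  by apply/card_gt0P; exists set0; rewrite inE; apply/forall_inP => x; rewrite inE.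
by case/(eq_bigmax_cond (fun S : {set T} => #|S|)) => S; exists S.
Qed.

Lemma width_wit : exists2 S, is_antichain le S & #|S| = width le.
Proof.
have : 0 < #|[pred S : {set T} | is_antichain le S]|.
  by apply/card_gt0P; exists set0; rewrite inE; apply/forall_inP => x; rewrite inE.
by case/(eq_bigmax_cond (fun S : {set T} => #|S|)) => S; exists S.
Qed.

Lemma chain1 x : reflexive le -> is_chain le [set x].
Proof.
move=> le_refl; apply/forall_inP => y /set1P ->.
by apply/forall_inP => z /set1P ->; rewrite le_refl.
Qed.

Lemma height_pos : reflexive le -> 0 < width le -> 0 < height le.
Proof.
move=> le_refl; have [A _ <-] := width_wit; case/card_gt0P => a _.
by apply: leq_trans (height_ub (chain1 a le_refl)); rewrite cards1.
Qed.

End HeightWidth.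

(* An induced copy sends a chain to sets of pairwise distinct sizes; so if these
   sizes all lie in s, the chain has at most size s elements. *)
Lemma chain_copy_levels (T : finType) (le : rel T) N (f : T -> {set 'I_N})
    (S : {set T}) (s : seq nat) :
  induced_copy le f -> is_chain le S -> (forall x, x \in S -> #|f x| \in s) ->
  #|S| <= size s.
Proof.
move=> [f_inj f_ord] /forall_inP S_chain S_levels.
have sizes_uniq : uniq [seq #|f x| | x <- enum S].
  rewrite map_inj_in_uniq ?enum_uniq // => x y; rewrite !mem_enum => Sx Sy Exy.
  apply: f_inj; apply/eqP; case/orP: (forall_inP (S_chain x Sx) y Sy).
    by move/f_ord => fxy; rewrite eqEcard fxy Exy leqnn.
  by move/f_ord => fyx; rewrite eq_sym eqEcard fyx Exy leqnn.
rewrite cardE -(size_map (fun x => #|f x|)); apply: uniq_leq_size sizes_uniq _.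
by move=> z /mapP [x Sx ->]; rewrite S_levels // -mem_enum.
Qed.

Definition prefix n (i : nat) : {set 'I_n} := [set u : 'I_n | u < i].

Lemma Qn_long_chain n : exists2 S, is_chain (@Qle n) S & #|S| = n.+1.
Proof.
have prefix_sub i j : i <= j -> prefix n i \subset prefix n j.
  by move=> ij; apply/subsetP => u; rewrite !inE => ui; apply: leq_trans ij.
exists [set prefix n i | i : 'I_n.+1].
  apply/forall_inP => _ /imsetP [i _ ->]; apply/forall_inP => _ /imsetP [j _ ->].
  by rewrite /Qle; case: (leqP i j) => [/prefix_sub -> | /ltnW/prefix_sub ->]; rewrite ?orbT.
rewrite card_imset ?card_ord // => i j Eij; apply/val_inj.
wlog lt_ij : i j Eij / i < j.
  by move=> H; case: (ltngtP i j) => [/H->| /(H _ _ (esym Eij))->|].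
have i_n : i < n := leq_trans lt_ij (ltn_ord j).
have := congr1 (fun A : {set 'I_n} => Ordinal i_n \in A) Eij.
by rewrite /= !inE ltnn lt_ij.
Qed.

Lemma no_mono_copy_few_levels (T : finType) (le : rel T) N (col : {set 'I_N} -> bool)
    b (S : {set T}) (s : seq nat) :
  is_chain le S -> size s < #|S| -> (forall X, col X = b -> #|X| \in s) ->
  ~ mono_copy le col b.
Proof.
move=> S_chain small levels [f [f_copy f_col]].
have := chain_copy_levels f_copy S_chain (fun x _ => levels _ (f_col x)).
by rewrite leqNgt small.
Qed.

Lemma copy_incomparable_middle (T : finType) (le : rel T) N (f : T -> {set 'I_N}) x y :
  induced_copy le f -> ~~ cmp le y x -> 0 < #|f x| < N.
Proof.
move=> [_ f_ord]; rewrite /cmp negb_or => /andP [Nyx Nxy].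
rewrite lt0n cards_eq0; apply/andP; split.
  by apply: contraNneq Nxy => fx0; apply/f_ord; rewrite fx0 sub0set.
have := max_card (f x); rewrite card_ord leq_eqVlt => /orP [/eqP fxT|//].
have fx_full : f x = setT.
  by apply/eqP; rewrite eqEcard subsetT cardsT card_ord fxT leqnn.
by move: Nyx; apply: contraNT => _; apply/f_ord; rewrite fx_full subsetT.
Qed.

(* In a trivial poset of width >= 2 some element is incomparable to a whole
   longest chain: two incomparable elements cannot both be comparable to it. *)
Lemma longest_chain_incomparable (T : finType) (le : rel T) :
  is_poset le -> trivial_poset le -> 2 <= width le ->
  exists S y, [/\ is_chain le S, #|S| = height le & forall s, s \in S -> ~~ cmp le y s].
Proof.
move=> le_poset le_triv w2.
have [A A_anti A_card] := width_wit le.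
have : 1 < #|A| by rewrite A_card.
case/card_gt1P => a [b [Aa Ab Nab]].
have /negbTE Cab : ~~ cmp le a b.
  by move/forall_inP: A_anti => /(_ a Aa)/forall_inP/(_ b Ab); rewrite Nab /cmp negb_or.
have [S S_chain S_card] := height_wit le.
have : 0 < #|S| by rewrite S_card; apply: height_pos; [case: le_poset | lia].
case/card_gt0P => s0 Ss0.
have away y : ~~ cmp le y s0 -> forall s, s \in S -> ~~ cmp le y s.
  move=> Ny s Ss; apply: contra Ny => Cys; apply: (cmp_trans le_poset le_triv Cys).
  by move/forall_inP: S_chain => /(_ s Ss)/forall_inP/(_ s0 Ss0).
case Ca: (cmp le a s0); last by exists S, a; split => //; apply: away; rewrite Ca.
case Cb: (cmp le b s0); last by exists S, b; split => //; apply: away; rewrite Cb.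
by move: Cab; rewrite (cmp_trans le_poset le_triv Ca) // cmp_sym.
Qed.

(* Width 1: colouring the levels below h-1 blue and the others red, with
   M < n+h-1, gives no blue chain of length h and no red Q_n. *)
Lemma lower_bound_width1 (T : finType) (le : rel T) n M :
  0 < height le -> M < n + height le - 1 -> ~ ramsey_prop le (@Qle n) M.
Proof.
move=> h_pos M_small ramsey; set h := height le in h_pos M_small.
have [S S_chain S_card] := height_wit le.
have [Q Q_chain Q_card] := Qn_long_chain n.
case: (ramsey (fun X => #|X| + 2 <= h)).
- apply: (no_mono_copy_few_levels (s := iota 0 h.-1) S_chain).
    by rewrite size_iota S_card; lia.
  by move=> X blue; rewrite mem_iota; lia.
- apply: (no_mono_copy_few_levels (s := iota h.-1 (M.+1 - h.-1)) Q_chain).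
    by rewrite size_iota Q_card; lia.
  move=> X /negbT red; rewrite mem_iota; have := max_card X; rewrite card_ord; lia.
Qed.

(* Width >= 2: with M <= n+h, colour blue the levels 0, M, those below h-1, and
   M-1 when h >= 2.  A blue copy of P would put a longest chain of P into the
   fewer than h blue levels strictly between 0 and M; red sets meet at most n
   levels. *)
Lemma lower_bound_width2 (T : finType) (le : rel T) n M :
  is_poset le -> trivial_poset le -> 2 <= width le ->
  M <= n + height le -> ~ ramsey_prop le (@Qle n) M.
Proof.
move=> le_poset le_triv w2 M_small ramsey.
have h_pos : 0 < height le by apply: height_pos; [case: le_poset | lia].
set h := height le in h_pos M_small.
have [Q Q_chain Q_card] := Qn_long_chain n.
case: (ramsey (fun X => [|| #|X| + 2 <= h, #|X| == 0, #|X| == M | (2 <= h) && (#|X|.+1 == M)])).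
- move=> [f [f_copy f_blue]].
  have [S [y [S_chain S_card Sy]]] := longest_chain_incomparable le_poset le_triv w2.
  pose s := if h == 1 then [::] else iota 1 (h - 2) ++ [:: M.-1].
  have : #|S| <= size s.
    apply: (chain_copy_levels f_copy S_chain) => x Sx.
    have := copy_incomparable_middle f_copy (Sy x Sx); have := f_blue x.
    rewrite /s; case: ifP => [/eqP | /eqP] h1; first by lia.
    by rewrite mem_cat mem_iota inE; lia.
  by rewrite S_card /s; case: ifP => [/eqP | /eqP] h1 /=; rewrite ?size_cat ?size_iota /=; lia.
- pose s := if h == 1 then iota 1 M.-1 else iota h.-1 (M.-1 - h.-1).
  apply: (no_mono_copy_few_levels (s := s) Q_chain).
    by rewrite Q_card /s; case: ifP => [/eqP | /eqP] h1; rewrite size_iota; lia.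
  move=> X /negbT red; have := max_card X; rewrite card_ord => XM.
  by rewrite /s; case: ifP => [/eqP | /eqP] h1; rewrite mem_iota; lia.
Qed.

Definition depth (T : finType) (le : rel T) (c : pred T) (p : T) : nat :=
  \max_(S : {set T} | [&& is_chain le S, [forall z in S, c z] & [forall z in S, le z p]]) #|S|.

Section Depth.
Variables (T : finType) (le : rel T) (c : pred T).
Hypothesis le_poset : is_poset le.

Lemma depth_mono p q : le q p -> depth le c q <= depth le c p.
Proof.
have [_ [_ le_trans]] := le_poset.
move=> qp; apply/bigmax_leqP => S /and3P [S_chain S_col /forall_inP S_below].
apply: (@leq_bigmax_cond _ _ (fun S : {set T} => #|S|)); rewrite S_chain S_col /=.
by apply/forall_inP => z /S_below zq; apply: le_trans qp.
Qed.

Lemma depth_bound p b :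
  (forall S, is_chain le S -> (forall z, z \in S -> c z) -> #|S| <= b) -> depth le c p <= b.
Proof.
by move=> bound; apply/bigmax_leqP => S /and3P [S_chain /forall_inP S_col _]; apply: bound.
Qed.

Lemma depth_pos p : c p -> 0 < depth le c p.
Proof.
have [le_refl _] := le_poset; move=> cp.
apply: leq_trans (@leq_bigmax_cond _ _ (fun S : {set T} => #|S|) [set p] _).
  by rewrite cards1.
rewrite chain1 //=; apply/andP; split; apply/forall_inP => z /set1P -> //.
Qed.

Lemma depth_lt p q : c p -> le q p -> q != p -> depth le c q < depth le c p.
Proof.
have [le_refl [le_anti le_trans]] := le_poset; move=> cp qp Nqp.
have : 0 < #|[pred S : {set T} |
               [&& is_chain le S, [forall z in S, c z] & [forall z in S, le z q]]]|.
  apply/card_gt0P; exists set0; rewrite inE.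
  by apply/and3P; split; apply/forall_inP => x; rewrite inE.
case/(eq_bigmax_cond (fun S : {set T} => #|S|)) => S; rewrite inE.
move=> /and3P [/forall_inP S_chain /forall_inP S_col /forall_inP S_below] S_max.
rewrite /depth S_max.
have below_p z : z \in S -> le z p by move/S_below => zq; apply: le_trans qp.
have pNS : p \notin S.
  by apply: contraNN Nqp => /S_below pq; apply/eqP; apply: le_anti; rewrite qp pq.
apply: leq_trans (@leq_bigmax_cond _ _ (fun S : {set T} => #|S|) (p |: S) _).
  by rewrite cardsU1 pNS.
apply/and3P; split.
- apply/forall_inP => x /setU1P Sx; apply/forall_inP => y /setU1P Sy.
  case: Sx => [->|Sx]; case: Sy => [->|Sy].
  + by rewrite le_refl.
  + by rewrite below_p ?orbT.
  + by rewrite below_p.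
  + exact: (forall_inP (S_chain x Sx)).
- by apply/forall_inP => x /setU1P [->|/S_col].
- by apply/forall_inP => x /setU1P [->|/below_p].
Qed.

End Depth.

Definition grid_le n h (p q : {set 'I_n} * 'I_h) : bool := (p.1 \subset q.1) && (p.2 <= q.2).

Lemma grid_poset n h : is_poset (@grid_le n h).
Proof.
split; first by move=> p; rewrite /grid_le subxx leqnn.
split.
  move=> [X i] [Y j] /andP [/andP [XY ij] /andP [YX ji]] /=.
  have -> : X = Y by apply/eqP; rewrite eqEsubset XY YX.
  by have -> : i = j by apply/val_inj/eqP; rewrite eqn_leq ij ji.
move=> q p r /andP [pq1 pq2] /andP [qr1 qr2].
by rewrite /grid_le (subset_trans pq1 qr1) (leq_trans pq2 qr2).
Qed.

(* Take J X to be
   the least level j whose depth is at most j. *)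
Lemma grid_chain_or_section n h' (c : pred ({set 'I_n} * 'I_h'.+1)) :
  (exists S, [/\ is_chain (@grid_le n h'.+1) S, h'.+1 <= #|S| & forall z, z \in S -> c z]) \/
  (exists J : {set 'I_n} -> 'I_h'.+1,
      (forall X Y : {set 'I_n}, X \subset Y -> J X <= J Y) /\ forall X, c (X, J X) = false).
Proof.
have grid := grid_poset n h'.+1.
case: (classic (exists S, [/\ is_chain (@grid_le n h'.+1) S, h'.+1 <= #|S|
                             & forall z, z \in S -> c z])) => [| no_chain]; [by left | right].
have depth_small p : depth (@grid_le n h'.+1) c p <= h'.
  apply: depth_bound => S S_chain S_col; rewrite leqNgt; apply/negP => S_long.
  by apply: no_chain; exists S.
pose J X := [arg min_(j < (@ord_max h') | depth (@grid_le n h'.+1) c (X, j) <= j) j].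
have J_spec X : depth (@grid_le n h'.+1) c (X, J X) <= J X /\
    forall j : 'I_h'.+1, depth (@grid_le n h'.+1) c (X, j) <= j -> J X <= j.
  by rewrite /J; case: arg_minnP => //= j.
exists J; split.
  move=> X Y XY; apply: (proj2 (J_spec X)); apply: leq_trans (proj1 (J_spec Y)).
  by apply: depth_mono => //; rewrite /grid_le XY leqnn.
move=> X; apply/negbTE/negP => cXJ; have [J_ok J_least] := J_spec X.
case EJ: (J X) J_ok => [[|j] j_lt] /= J_ok.
  by have := depth_pos grid cXJ; rewrite EJ; lia.
have j_lt' : j < h'.+1 by lia.
have : depth (@grid_le n h'.+1) c (X, Ordinal j_lt') <= j.
  rewrite -ltnS; apply: leq_trans J_ok; rewrite -EJ; apply: (depth_lt grid cXJ); rewrite EJ.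
    by rewrite /grid_le subxx /=.
  by apply/negP => /eqP []; lia.
by move/J_least; rewrite EJ /=; lia.
Qed.

(* The embedding of Q_n x Q_k x [h'+1] into Q_(n+k+h'): the triple (X, Y, j) is
   sent to X, Y and the initial segment of length j placed side by side. *)
Definition glue n k h' (X : {set 'I_n}) (Y : {set 'I_k}) (j : nat) : {set 'I_(n + k + h')} :=
  [set u | match fintype.split u with
           | inl v => match fintype.split v with inl x => x \in X | inr y => y \in Y end
           | inr i => i < j end].

Lemma glue_subset n k h' X Y j X' Y' j' : j <= h' ->
  (@glue n k h' X Y j \subset glue h' X' Y' j') = [&& X \subset X', Y \subset Y' & j <= j'].
Proof.
move=> j_le; apply/idP/idP.
- move/subsetP => sub; apply/and3P; split.
  + apply/subsetP => x Xx.
    by have := sub (unsplit (inl (unsplit (inl x)))); rewrite !inE !unsplitK; apply.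
  + apply/subsetP => y Yy.
    by have := sub (unsplit (inl (unsplit (inr y)))); rewrite !inE !unsplitK; apply.
  + rewrite leqNgt; apply/negP => lt_j'j.
    have j'_lt : j' < h' by lia.
    have := sub (unsplit (inr (Ordinal j'_lt))); rewrite !inE !unsplitK /= => /(_ lt_j'j).
    by rewrite ltnn.
- case/and3P => /subsetP XX' /subsetP YY' jj'; apply/subsetP => u; rewrite !inE.
  case: fintype.split => [v|i]; first case: fintype.split => [x|y].
  + exact: XX'.
  + exact: YY'.
  + by move=> ij; apply: leq_trans jj'.
Qed.

Definition rank (T : finType) (le : rel T) (S : {set T}) (s : T) : nat :=
  #|[set t in S | le t s && (t != s)]|.

Section Rank.
Variables (T : finType) (le : rel T).
Hypothesis le_poset : is_poset le.

Lemma rank_mono (S : {set T}) s t : le s t -> rank le S s <= rank le S t.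
Proof.
have [_ [le_anti le_trans]] := le_poset; move=> st.
apply: subset_leq_card; apply/subsetP => u; rewrite !inE => /and3P [-> us Nus] /=.
rewrite (le_trans _ _ _ us st); apply: contraNneq Nus => Eut.
by apply/eqP/le_anti; rewrite us Eut st.
Qed.

Lemma rank_lt (S : {set T}) s t : s \in S -> le s t -> s != t -> rank le S s < rank le S t.
Proof.
have [_ [le_anti le_trans]] := le_poset; move=> Ss st Nst.
apply: proper_card; rewrite properE; apply/andP; split.
  apply/subsetP => u; rewrite !inE => /and3P [-> us Nus] /=.
  rewrite (le_trans _ _ _ us st); apply: contraNneq Nst => Eut.
  by apply/eqP/le_anti; rewrite st -Eut us.
by apply/subsetPn; exists s; rewrite !inE ?Ss ?st ?Nst // eqxx !andbF.
Qed.

Lemma chain_rank_le (S : {set T}) s t : is_chain le S -> s \in S -> t \in S ->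
  le s t = (rank le S s <= rank le S t).
Proof.
have [le_refl _] := le_poset; move=> /forall_inP S_chain Ss St.
apply/idP/idP; first exact: rank_mono.
case/orP: (forall_inP (S_chain s Ss) t St) => // ts.
have [-> // | Nts] := eqVneq t s.
by move=> st; have := rank_lt St ts Nts; lia.
Qed.

Lemma chain_rank_onto (S : {set T}) i :
  is_chain le S -> i < #|S| -> exists2 s, s \in S & rank le S s = i.
Proof.
move=> S_chain lt_iS.
have rank_inj : {in enum S &, injective (rank le S)}.
  have [_ [le_anti _]] := le_poset.
  move=> s t; rewrite !mem_enum => Ss St E.
  by apply: le_anti; rewrite !(chain_rank_le S_chain) // E leqnn.
have ranks_uniq : uniq [seq rank le S s | s <- enum S] by rewrite map_inj_in_uniq // enum_uniq.
have ranks_sub : {subset [seq rank le S s | s <- enum S] <= iota 0 #|S|}.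
  move=> _ /mapP [s Ss ->]; rewrite mem_iota /= add0n; rewrite mem_enum in Ss.
  apply: proper_card; rewrite properE; apply/andP; split.
    by apply/subsetP => u; rewrite inE => /andP [].
  by apply/subsetPn; exists s => //; rewrite !inE eqxx !andbF.
have [_ ranks_all] := uniq_min_size ranks_uniq ranks_sub ltac:(by rewrite size_map size_iota cardE).
have : i \in iota 0 #|S| by rewrite mem_iota.
by rewrite -ranks_all => /mapP [s Ss ->]; exists s; rewrite // -mem_enum.
Qed.

(* The element of rank i of a chain (x0 when there is none). *)
Definition chain_elem (S : {set T}) (x0 : T) (i : nat) : T :=
  odflt x0 [pick s in S | rank le S s == i].

Lemma chain_elemP (S : {set T}) x0 i : is_chain le S -> i < #|S| ->
  chain_elem S x0 i \in S /\ rank le S (chain_elem S x0 i) = i.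
Proof.
move=> S_chain lt_iS; rewrite /chain_elem; case: pickP => [s /andP [Ss /eqP] | none] //=.
have [s Ss si] := chain_rank_onto S_chain lt_iS.
by have := none s; rewrite Ss si eqxx.
Qed.

End Rank.

(* In a trivial poset the strict down-set of x together with x is a chain, so
   ranks are smaller than the height. *)
Lemma rank_lt_height (T : finType) (le : rel T) x :
  is_poset le -> trivial_poset le -> rank le [set: T] x < height le.
Proof.
move=> le_poset le_triv; have [le_refl _] := le_poset.
set D := [set t in [set: T] | le t x && (t != x)].
have xND : x \notin D by rewrite !inE eqxx /= !andbF.
have cmp_x u : u \in x |: D -> cmp le u x.
  by case/setU1P => [-> | ]; rewrite /cmp ?le_refl // inE => /and3P [_ -> _].
have : is_chain le (x |: D).
  apply/forall_inP => u Du; apply/forall_inP => v Dv.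
  by apply: (cmp_trans le_poset le_triv (cmp_x u Du)); rewrite cmp_sym cmp_x.
by move/height_ub; rewrite cardsU1 xND.
Qed.

Lemma set_injection (T U : finType) (A : {set T}) (B : {set U}) (u0 : U) :
  #|A| <= #|B| -> exists g : T -> U, {in A &, injective g} /\ {in A, forall a, g a \in B}.
Proof.
move=> AB; pose g a := nth u0 (enum B) (index a (enum A)).
have idx_lt a : a \in A -> index a (enum A) < size (enum B).
  by move=> Aa; rewrite -cardE; apply: leq_trans AB; rewrite cardE index_mem mem_enum.
exists g; split => [a b Aa Ab Eab | a Aa]; last by rewrite -mem_enum mem_nth ?idx_lt.
have : index a (enum A) = index b (enum A).
  by apply/eqP; rewrite -(nth_uniq u0 (idx_lt a Aa) (idx_lt b Ab)) ?enum_uniq //; apply/eqP.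
by move/(congr1 (nth a (enum A))); rewrite !nth_index ?mem_enum.
Qed.

Lemma antichain_representative (T : finType) (le : rel T) (A : {set T}) :
  is_poset le -> trivial_poset le -> is_antichain le A -> #|A| = width le ->
  exists rep : T -> T, (forall x, rep x \in A) /\ forall x y, (rep x == rep y) = cmp le x y.
Proof.
move=> le_poset le_triv A_anti A_max; have [le_refl _] := le_poset.
have cmpA x : exists2 a, a \in A & cmp le x a.
  apply/exists_inP; apply: contraT; rewrite negb_exists_in => /forall_inP Nx.
  have xNA : x \notin A by apply/negP => /Nx; rewrite /cmp le_refl.
  have : is_antichain le (x |: A).
    apply/forall_inP => u /setU1P Au; apply/forall_inP => v /setU1P Av; apply/implyP => Nuv.
    case: Au Av Nuv => [-> | Au] [-> | Av]; rewrite ?eqxx // => Nuv.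
    - by rewrite -negb_or; apply: Nx.
    - by rewrite andbC -negb_or; apply: Nx.
    - by move/forall_inP: A_anti => /(_ u Au)/forall_inP/(_ v Av)/implyP; apply.
  by move/width_ub; rewrite cardsU1 xNA -A_max ltnn.
have cmpA_uniq x a b : a \in A -> b \in A -> cmp le x a -> cmp le x b -> a = b.
  move=> Aa Ab xa xb; apply/eqP; apply: contraTT (@cmp_trans T le le_poset le_triv a x b _ xb).
    move=> Nab; move/forall_inP: A_anti => /(_ a Aa)/forall_inP/(_ b Ab)/implyP/(_ Nab).
    by rewrite /cmp negb_or.
  by rewrite cmp_sym.
pose rep x := odflt x [pick a in A | cmp le x a].
have repP x : rep x \in A /\ cmp le x (rep x).
  rewrite /rep; case: pickP => [a /andP [] // | none] /=.
  by have [a Aa xa] := cmpA x; have := none a; rewrite Aa xa.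
exists rep; split => [x | x y]; first by case: (repP x).
have [[Ax xr] [Ay yr]] := (repP x, repP y).
apply/eqP/idP => [Exy | xy].
  by apply: (cmp_trans le_poset le_triv xr); rewrite Exy cmp_sym.
by apply: (cmpA_uniq x) => //; apply: (cmp_trans le_poset le_triv xy yr).
Qed.

Lemma component_labels (T : finType) (le : rel T) k :
  is_poset le -> trivial_poset le -> width le <= 'C(k, k./2) ->
  exists lab : T -> {set 'I_k},
    (forall x, #|lab x| = k./2) /\ forall x y, (lab x == lab y) = cmp le x y.
Proof.
move=> le_poset le_triv w_small.
have [A A_anti A_max] := width_wit le.
have [rep [repA repE]] := antichain_representative le_poset le_triv A_anti A_max.
have [g [g_inj g_level]] : exists g : T -> {set 'I_k},
    {in A &, injective g} /\ {in A, forall a, g a \in [set Y : {set 'I_k} | #|Y| == k./2]}.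
  by apply: (set_injection set0); rewrite card_draws card_ord A_max.
exists (fun x => g (rep x)); split => [x | x y].
  by have := g_level _ (repA x); rewrite inE => /eqP.
by rewrite -repE; apply/eqP/eqP => [/g_inj -> | ->].
Qed.

Section UpperBound.
Variables (T : finType) (le : rel T) (n k h' : nat).
Hypotheses (le_poset : is_poset le) (le_triv : trivial_poset le) (le_height : height le = h'.+1).
Variable col : {set 'I_(n + k + h')} -> bool.

Definition slice_col (Y : {set 'I_k}) (p : {set 'I_n} * 'I_h'.+1) : bool :=
  col (glue h' p.1 Y p.2).

Lemma red_section_copy Y (J : {set 'I_n} -> 'I_h'.+1) :
  (forall X X' : {set 'I_n}, X \subset X' -> J X <= J X') ->
  (forall X, slice_col Y (X, J X) = false) -> mono_copy (@Qle n) col false.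
Proof.
move=> J_mono J_red; exists (fun X => glue h' X Y (J X)); split => //.
have J_le X : J X <= h' by rewrite -ltnS.
have glue_ord X X' : Qle X X' <-> glue h' X Y (J X) \subset glue h' X' Y (J X').
  by rewrite /Qle glue_subset //; split => [XX' | /and3P [] //]; rewrite XX' subxx J_mono.
split=> // X X' E; apply/eqP; rewrite eqEsubset; apply/andP.
by split; apply/glue_ord; rewrite E.
Qed.

(* If every slice Y contains a blue chain B Y of length h'+1, then P has a blue
   copy: x goes to the slice of its component's label, at the point of that
   blue chain whose rank is the rank of x in P. *)
Lemma blue_copy_from_chains (B : {set 'I_k} -> {set {set 'I_n} * 'I_h'.+1}) :
  width le <= 'C(k, k./2) ->
  (forall Y, [/\ is_chain (@grid_le n h'.+1) (B Y), h'.+1 <= #|B Y|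
               & forall z, z \in B Y -> slice_col Y z]) ->
  mono_copy le col true.
Proof.
move=> w_small B_blue; have [le_refl [le_anti _]] := le_poset.
have grid := grid_poset n h'.+1.
have [lab [lab_card lab_eq]] := component_labels le_poset le_triv w_small.
pose z x := chain_elem (@grid_le n h'.+1) (B (lab x)) (set0, ord0) (rank le [set: T] x).
have zP x : z x \in B (lab x) /\ rank (@grid_le n h'.+1) (B (lab x)) (z x) = rank le [set: T] x.
  have [B_chain B_long _] := B_blue (lab x).
  apply: chain_elemP => //; apply: leq_trans B_long.
  by rewrite -le_height; apply: rank_lt_height.
have z_le x y : lab x = lab y ->
    grid_le (z x) (z y) = (rank le [set: T] x <= rank le [set: T] y).
  move=> Exy; have [B_chain _ _] := B_blue (lab y).
  have [[Bx rx] [By ry]] := (zP x, zP y); rewrite Exy in Bx rx.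
  by rewrite (chain_rank_le grid B_chain Bx By) rx ry.
pose f x := glue h' (z x).1 (lab x) (z x).2.
have z_bound x : (z x).2 <= h' by rewrite -ltnS.
have f_ord x y : le x y <-> f x \subset f y.
  rewrite /f glue_subset ?z_bound; split => [xy | /and3P [zx1 lab_sub zx2]].
    have Exy : lab x = lab y by apply/eqP; rewrite lab_eq /cmp xy.
    have : grid_le (z x) (z y) by rewrite z_le // rank_mono.
    by rewrite Exy subxx /grid_le => /andP [-> ->].
  have Exy : lab x = lab y by apply/eqP; rewrite eqEcard lab_sub !lab_card leqnn.
  have rxy : rank le [set: T] x <= rank le [set: T] y by rewrite -z_le // /grid_le zx1 zx2.
  have /orP [// | yx] : cmp le x y by rewrite -lab_eq Exy.
  have [<- // | Nyx] := eqVneq y x.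
  by have := rank_lt le_poset (in_setT y) yx Nyx; rewrite ltnNge rxy.
exists f; split => [| x]; first split => // x y Exy.
  by apply: le_anti; apply/andP; split; apply/f_ord; rewrite Exy.
by have [_ _ B_col] := B_blue (lab x); apply: B_col (proj1 (zP x)).
Qed.

End UpperBound.

Lemma upper_bound (T : finType) (le : rel T) n k h' :
  is_poset le -> trivial_poset le -> height le = h'.+1 -> width le <= 'C(k, k./2) ->
  ramsey_prop le (@Qle n) (n + k + h').
Proof.
move=> le_poset le_triv le_height w_small col.
case: (classic (exists Y (J : {set 'I_n} -> 'I_h'.+1),
                  (forall X X' : {set 'I_n}, X \subset X' -> J X <= J X') /\
                  forall X, slice_col col Y (X, J X) = false)).
  by move=> [Y [J [J_mono J_red]]]; right; apply: red_section_copy J_mono J_red.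
move=> no_section; left.
pose blue_chain Y S :=
  [&& is_chain (@grid_le n h'.+1) S, h'.+1 <= #|S| & [forall z in S, slice_col col Y z]].
pose B Y := odflt set0 [pick S | blue_chain Y S].
apply: (blue_copy_from_chains le_poset le_triv le_height (B := B)) => // Y.
rewrite /B.
case: pickP => [S /and3P [S_chain S_long /forall_inP S_blue] // | none].
case: (grid_chain_or_section (slice_col col Y)) => [[S [S_chain S_long S_blue]] | [J J_red]].
  by have := none S; rewrite /blue_chain S_chain S_long; move/forall_inP: S_blue => ->.
by case: no_section; exists Y, J.
Qed.

Lemma central_binomial_rec j :
  'C(j.+1.*2, j.+1) = 2 * 'C(j.*2.+1, j) /\ j.+1 * 'C(j.*2.+1, j) = j.*2.+1 * 'C(j.*2, j).
Proof.
split; last by rewrite (mul_bin_down j.*2.+1 j); congr (_ * _); lia.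
have E := mul_bin_diag j.+1.*2 j; rewrite doubleS /= in E *.
apply/eqP; rewrite -(eqn_pmul2l (ltn0Sn j)) -E; apply/eqP; nia.
Qed.

Lemma central_binomial_lb j : 16 ^ j.+1 <= 'C(j.+1.*2, j.+1) ^ 2 * (4 * j.+1).
Proof.
elim: j => [// | j IH].
have [E1 E2] := central_binomial_rec j.+1.
set a := 'C(j.+1.*2, j.+1) in IH E2; set b := 'C(j.+2.*2, j.+2) in E1 *.
set c := 'C(j.+1.*2.+1, j.+1) in E1 E2.
(* (j+2) b = 2 (2j+3) a and 4 (j+1) (j+2) <= (2j+3)^2 *)
have Eb : j.+2 * b = 2 * (j.+1.*2.+1) * a by rewrite E1 mulnCA E2; lia.
rewrite -(leq_pmul2l (ltn0Sn j.+1)) expnS.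
apply: (@leq_trans (16 * (j.+2 * (4 * j.+1 * a ^ 2)))); first by rewrite mulnCA leq_mul2l; nia.
have -> : j.+2 * (b ^ 2 * (4 * j.+2)) = 4 * (j.+2 * b) ^ 2 by lia.
rewrite Eb; nia.
Qed.

Lemma central_binomial_bound m : 4 ^ m <= 'C(m, m./2) ^ 2 * (2 * m.+1).
Proof.
have [j [-> | ->]] : exists j, m = j.*2 \/ m = j.*2.+1.
  by exists m./2; rewrite -{1 3}(odd_double_half m); case: (odd m); [right | left].
- rewrite doubleK; case: j => [// | j].
  rewrite -mul2n expnM; apply: leq_trans (central_binomial_lb j) _.
  by rewrite mul2n leq_mul2l; apply/orP; right; lia.
- rewrite /= uphalf_double; have [E1 _] := central_binomial_rec j.
  have e4 : 4 * 4 ^ j.*2.+1 = 16 ^ j.+1 by rewrite -expnS -doubleS -mul2n expnM.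
  have := central_binomial_lb j; rewrite E1 expnMn -e4; nia.
Qed.

Lemma central_binomial_lt_pow4 w m : 'C(m, m./2) < w -> 4 ^ m < w ^ 2 * (2 * m.+1).
Proof.
move=> lt_w; apply: leq_ltn_trans (central_binomial_bound m) _.
by rewrite ltn_mul2r ltn_exp2r.
Qed.

Lemma central_binomial_lt_pow2 w m : 'C(m, m./2) < w -> 2 ^ m.+1 <= w ^ 2.
Proof.
move=> lt_w; case: (leqP m 4) => [m_small | m_big].
  apply: leq_trans (_ : 'C(m, m./2).+1 ^ 2 <= w ^ 2); last by rewrite leq_exp2r.
  by case: m m_small {lt_w} => [|[|[|[|[|]]]]].
have pow2_big : 4 * m.+1 <= 2 ^ m.
  elim: m m_big {lt_w} => [// | m IH]; rewrite ltnS leq_eqVlt => /orP [/eqP <- // | /IH].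
  by rewrite expnS; lia.
have lt_sq := central_binomial_lt_pow4 lt_w.
have sq : 4 ^ m = 2 ^ m * 2 ^ m by rewrite -expnMn.
rewrite expnS; apply: ltnW; rewrite -(ltn_pmul2r (_ : 0 < 2 * m.+1)) //.
apply: leq_ltn_trans lt_sq; rewrite sq; move: pow2_big; set p := 2 ^ m; nia.
Qed.

(* The logarithmic estimate: with L = log w, 2^(m+1) <= w^2 gives m+1 <= 2L
   and 4^m < 2(m+1) w^2 gives 2m < 2L + 1 + log(m+1) <= 2L + 2 + log L. *)
Section LogEstimate.
Open Scope R_scope.

Lemma INR_expn a b : INR (a ^ b)%N = INR a ^ b.
Proof. by elim: b => [// | b IH]; rewrite expnS -multE mult_INR IH. Qed.

Lemma ln_le x y : 0 < x -> x <= y -> ln x <= ln y.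
Proof.
by move=> x_pos /Rle_lt_or_eq_dec [/(ln_increasing _ _ x_pos) /Rlt_le | ->] //; apply: Rle_refl.
Qed.

Lemma ln_INR_le a b : (0 < a)%N -> (a <= b)%N -> ln (INR a) <= ln (INR b).
Proof.
by move=> a_pos ab; apply: ln_le; [apply: lt_0_INR; apply/ltP | apply: le_INR; apply/leP].
Qed.

Lemma log_estimate (w m : nat) :
  (2 ^ m.+1 <= w ^ 2)%N -> (4 ^ m < w ^ 2 * (2 * m.+1))%N ->
  INR m - 1 < log2 (INR w) + / 2 * log2 (log2 (INR w)).
Proof.
move=> pow2_le pow4_lt.
have w_pos : (0 < w)%N.
  by rewrite lt0n; apply: contraTneq pow2_le => ->; rewrite -ltnNge exp0n // expn_gt0.
have two : INR 2 = 2 by [].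
set l2 := ln 2; set lw := ln (INR w); set mu := INR m.
have l2_pos : 0 < l2 by rewrite /l2 -ln_1; apply: ln_increasing; lra.
have ln_sq : ln (INR (w ^ 2)) = 2 * lw.
  by rewrite INR_expn ln_pow ?two //; apply: lt_0_INR; apply/ltP.
have R1 : (mu + 1) * l2 <= 2 * lw.
  have := ln_INR_le (expn_gt0 2 m.+1) pow2_le.
  rewrite ln_sq INR_expn ln_pow two ?S_INR -/l2 -/mu; lra.
have R2 : 2 * mu * l2 < 2 * lw + l2 + ln (mu + 1).
  have mu_pos : 0 <= mu by apply: pos_INR.
  have pos4 : 0 < INR (4 ^ m) by apply: lt_0_INR; apply/ltP; rewrite expn_gt0.
  have := ln_increasing _ _ pos4 (lt_INR _ _ (ltP pow4_lt)).
  have -> : ln (INR (4 ^ m)) = 2 * mu * l2.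
    rewrite INR_expn ln_pow; last by rewrite /=; lra.
    have -> : INR 4 = 2 * 2 by rewrite /=; lra.
    by rewrite ln_mult -/l2 -/mu; lra.
  have -> : ln (INR (w ^ 2 * (2 * m.+1))) = 2 * lw + l2 + ln (mu + 1).
    have w2_pos : 0 < INR (w ^ 2) by apply: lt_0_INR; apply/ltP; rewrite expn_gt0 w_pos.
    rewrite -multE mult_INR (mult_INR 2) (S_INR m) two -/mu.
    by rewrite ln_mult ?ln_sq ?ln_mult -?/l2; lra.
  done.
have R3 : ln (mu + 1) - l2 <= ln (lw / l2).
  have mu_pos : 0 <= mu by apply: pos_INR.
  have -> : ln (mu + 1) - l2 = ln ((mu + 1) / 2).
    by rewrite /Rdiv ln_mult ?ln_Rinv; try lra.
  apply: ln_le; first lra.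
  apply: (Rmult_le_reg_r (2 * l2)); first lra.
  have -> : lw / l2 * (2 * l2) = 2 * lw by field; lra.
  have -> : (mu + 1) / 2 * (2 * l2) = (mu + 1) * l2 by field.
  exact: R1.
rewrite /log2 -/lw -/l2.
have -> : lw / l2 + / 2 * (ln (lw / l2) / l2) = (2 * lw + ln (lw / l2)) / (2 * l2) by field; lra.
apply: (Rmult_lt_reg_r (2 * l2)); first lra.
rewrite /Rdiv Rmult_assoc Rinv_l; lra.
Qed.

End LogEstimate.

Lemma ramsey_number_exists (T1 T2 : finType) (le1 : rel T1) (le2 : rel T2) M :
  ramsey_prop le1 le2 M -> exists N, is_ramsey_number le1 le2 N /\ N <= M.
Proof.
elim/ltn_ind: M => M IH ramsey_M.
case: (classic (exists2 M', M' < M & ramsey_prop le1 le2 M')) => [[M' lt_M' ramsey_M'] | none].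
  by have [N [N_ramsey N_le]] := IH M' lt_M' ramsey_M'; exists N; split; last lia.
by exists M; split => //; split => // M' lt_M' ramsey_M'; apply: none; exists M'.
Qed.

Lemma width_binomial_log w : 2 <= w ->
  exists m, w <= 'C(m.+1, m.+1./2) /\
    (INR m - 1 < log2 (INR w) + / 2 * log2 (log2 (INR w)))%R.
Proof.
move=> w2.
have cover : exists k, w <= 'C(k, k./2).
  exists w.*2; rewrite doubleK; elim: (w) => [// | v IH].
  have C_pos : 0 < 'C(v.*2, v) by rewrite bin_gt0 -addnn leq_addr.
  rewrite (proj1 (central_binomial_rec v)).
  apply: (@leq_trans (2 * 'C(v.*2, v))); first by lia.
  by rewrite leq_mul2l leq_bin2l.
case: (ex_minnP cover) => [[| m]]; first by rewrite bin0; lia.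
move=> w_le least; exists m; split => //.
have lt_w : 'C(m, m./2) < w by rewrite ltnNge; apply/negP => /least; lia.
exact: log_estimate (central_binomial_lt_pow2 lt_w) (central_binomial_lt_pow4 lt_w).
Qed.

Theorem corollary7 (T : finType) (le : rel T) :
  is_poset le -> trivial_poset le ->
  (width le = 1 ->
     forall n : nat, 0 < n ->
       is_ramsey_number le (@Qle n) (n + height le - 1)) /\
  (2 <= width le ->
     forall n : nat, 0 < n ->
       exists N : nat, is_ramsey_number le (@Qle n) N /\
         n + height le + 1 <= N /\
         (INR N < INR n + INR (height le) + log2 (INR (width le))
                  + / 2 * log2 (log2 (INR (width le))) + 1)%R).
Proof.
move=> le_poset le_triv; have [le_refl _] := le_poset.
have height_S : 0 < width le -> exists h', height le = h'.+1.
  by move/(height_pos le_refl); case: (height le) => [| h'] //; exists h'.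
split => [w1 n _ | w2 n _].
(* width 1: the upper bound with k = 0 meets the lower bound n + h - 1 *)
- have [h' h_eq] := height_S ltac:(by rewrite w1).
  split; last by move=> M M_small; apply: lower_bound_width1 M_small; rewrite h_eq.
  have := upper_bound (n := n) (k := 0) le_poset le_triv h_eq; rewrite w1 addn0 => /(_ isT).
  by rewrite h_eq addnS subn1.
(* width >= 2: take the least Ramsey N; it exceeds n + h and is at most
   n + (m+1) + h - 1 for the m of the logarithmic estimate *)
- have [h' h_eq] := height_S (ltnW w2).
  have [m [w_le log_bound]] := width_binomial_log w2.
  have [N [N_ramsey N_le]] :=
    ramsey_number_exists (upper_bound (n := n) le_poset le_triv h_eq w_le).
  exists N; split => //; split.
    rewrite leqNgt; apply/negP => N_small.
    by apply: (lower_bound_width2 le_poset le_triv w2 _ (proj1 N_ramsey)); lia.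
  have : (INR N <= INR (n + m.+1 + h'))%R by apply: le_INR; apply/leP.
  by rewrite h_eq !plus_INR !S_INR; lra.
Qed.
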